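(* Let $\phi_n(x)=((n+1)x^2-3x-n)U_n(x)+(x+1)U_{n-1}(x)+x+1$. Define, for $k\ge1$, \[ Q_{2k}(x)=((2k+1)x^2-3x-2k)(U_k(x)-U_{k-1}(x))+(x+1)(U_{k-1}(x)-U_{k-2}(x)), \] and, for $k\ge0$, \[ Q_{2k+1}(x)=((2k+2)x^2-3x-2k-1)(U_{k+1}(x)-U_{k-1}(x))+(x+1)(U_k(x)-U_{k-2}(x)). \] Then $\phi_n(x)=U^{\mathrm e}_n(x)\,Q_n(x)$ for all $n\ge1$.
   Context: $U_n$ is the Chebyshev polynomial of the second kind, $U_n(\cos\theta)=\sin((n+1)\theta)/\sin\theta$, extended to negative indices via the recurrence $U_{k+1}=2xU_k-U_{k-1}$, i.e. $U_{-1}=0$, $U_{-2}=-1$. $U^{\mathrm e}_n$ is defined by $U^{\mathrm e}_n(\cos\theta)=\frac{\sin((n+1)\theta/2)}{\sin(\theta/2)}$ for $n$ even and $U^{\mathrm e}_n(\cos\theta)=\frac{\sin((n+1)\theta/2)}{\sin\theta}$ for $n$ odd (a polynomial in $\cos\theta$). Note $\phi_n(x)=\frac14\Phi_n(2x)$ where $\Phi_n(x)=((n+1)x^2-6x-4n)U_n(x/2)+2(x+2)U_{n-1}(x/2)+2(x+2)$. *)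

From HB Require Import structures.
From mathcomp Require Import all_boot all_order all_algebra.
From mathcomp Require Import reals trigo.
Set Implicit Arguments. Unset Strict Implicit. Unset Printing Implicit Defensive.
Import Order.TTheory GRing.Theory Num.Theory.
Local Open Scope ring_scope.

Fixpoint chebU_nat {R : comNzRingType} (n : nat) : {poly R} :=
  match n with
  | 0 => 1
  | 1 => 2%:P * 'X
  | (m.+1 as m1).+1 => 2%:P * 'X * chebU_nat m1 - chebU_nat m
  end.

(* Extension to all integer indices via the same recurrence:
   U_{-1} = 0 and U_{-(m+2)} = - U_m  (so U_{-2} = -1). *)
Definition chebU {R : comNzRingType} (z : int) : {poly R} :=
  match z with
  | Posz n => chebU_nat n
  | Negz 0 => 0
  | Negz m.+1 => - chebU_nat m
  end.

Definition phi {R : comNzRingType} (n : nat) : {poly R} :=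
  ((n.+1)%:R%:P * 'X^2 - 3%:P * 'X - n%:R%:P) * chebU (n%:Z)
  + ('X + 1) * chebU (n%:Z - 1) + 'X + 1.

Definition Q_even {R : comNzRingType} (k : nat) : {poly R} :=
  ((2 * k + 1)%:R%:P * 'X^2 - 3%:P * 'X - (2 * k)%:R%:P)
    * (chebU (k%:Z) - chebU (k%:Z - 1))
  + ('X + 1) * (chebU (k%:Z - 1) - chebU (k%:Z - 2)).

Definition Q_odd {R : comNzRingType} (k : nat) : {poly R} :=
  ((2 * k + 2)%:R%:P * 'X^2 - 3%:P * 'X - (2 * k + 1)%:R%:P)
    * (chebU (k%:Z + 1) - chebU (k%:Z - 1))
  + ('X + 1) * (chebU (k%:Z) - chebU (k%:Z - 2)).

Definition Q {R : comNzRingType} (n : nat) : {poly R} :=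
  if odd n then Q_odd n./2 else Q_even n./2.

Definition Ue_trig {R : realType} (n : nat) (theta : R) : R :=
  if odd n then sin (n.+1%:R * theta / 2) / sin theta
  else sin (n.+1%:R * theta / 2) / sin (theta / 2).

(* p is the polynomial U^e_n: p(cos theta) equals the defining expression
   whenever the expression is defined (sin theta <> 0). *)
Definition is_Ue {R : realType} (n : nat) (p : {poly R}) : Prop :=
  forall theta : R, sin theta != 0 -> p.[cos theta] = Ue_trig n theta.

From HB Require Import structures.
From mathcomp Require Import all_boot all_order all_algebra.
From mathcomp Require Import reals trigo.
From mathcomp Require Import ring.
Import Order.TTheory GRing.Theory Num.Theory.
Local Open Scope ring_scope.

(* Write S_j := U_{j-1}, so that S_j(cos t) sin t = sin (j t).  The addition
   formula S_{m+n+1} = S_{m+1} S_{n+1} - S_m S_n gives U_{2k} = S_{k+1}^2 - S_k^2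
   and U_{2k+1} = S_{k+1} (S_{k+2} - S_k); with the recurrence, every Chebyshev
   value occurring in phi_n and Q_n (n = 2k or 2k+1) becomes a polynomial in x,
   S_k and S_{k+1}.  The sum-to-product formulas give U^e_{2k} = S_{k+1} + S_k
   and U^e_{2k+1} = S_{k+1}.  After these substitutions phi_n - U^e_n Q_n equals
   (x + 1) (1 - (S_{k+1}^2 - 2x S_{k+1} S_k + S_k^2)), which vanishes by the
   Cassini identity S_{k+1}^2 - S_k S_{k+2} = 1. *)

Section ShiftedChebyshev.
Variable R : comNzRingType.

Definition chebUp (j : nat) : {poly R} := chebU (j%:Z - 1).

Lemma chebUp0 : chebUp 0 = 0. Proof. by []. Qed.

Lemma chebUpS j : chebUp j.+1 = chebU_nat j.
Proof. by rewrite /chebUp -[j.+1]addn1 PoszD addrK. Qed.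

Lemma chebUp1 : chebUp 1 = 1. Proof. exact: chebUpS. Qed.

Lemma chebUp2 : chebUp 2 = 2%:P * 'X. Proof. exact: chebUpS. Qed.

Lemma chebUp_rec j : chebUp j.+2 = 2%:P * 'X * chebUp j.+1 - chebUp j.
Proof.
rewrite !chebUpS; case: j => [|j]; last by rewrite chebUpS.
by rewrite chebUp0 mulr1 subr0.
Qed.

Lemma chebUpD m n :
  chebUp (m + n).+1 = chebUp m.+1 * chebUp n.+1 - chebUp m * chebUp n.
Proof.
suff /(_ n)[] : forall n,
       chebUp (m + n).+1 = chebUp m.+1 * chebUp n.+1 - chebUp m * chebUp n
    /\ chebUp (m + n.+1).+1 = chebUp m.+1 * chebUp n.+2 - chebUp m * chebUp n.+1 by [].
elim=> [|{}n [IHn IHnS]].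
  by rewrite addn0 addn1 chebUp0 chebUp1 chebUp2 chebUp_rec; split; ring.
split=> //; rewrite !addnS in IHnS *.
by rewrite chebUp_rec IHnS IHn (chebUp_rec n.+1) (chebUp_rec n); ring.
Qed.

Lemma chebU_Posz k : chebU k%:Z = chebUp k.+1.
Proof. by rewrite chebUpS. Qed.

Lemma chebU_addn1 k : chebU (k%:Z + 1) = chebUp k.+2.
Proof. by rewrite -PoszD addn1 chebU_Posz. Qed.

Lemma chebU_subn1 k : chebU (k%:Z - 1) = chebUp k.
Proof. by []. Qed.

Lemma chebU_subn2 k : chebU (k%:Z - 2) = 2%:P * 'X * chebUp k - chebUp k.+1.
Proof.
case: k => [|k]; first by rewrite chebUp0 chebUp1 mulr0 [RHS]add0r.
rewrite chebUp_rec opprB subrKC /chebUp.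
by rewrite -[k.+1]addn1 PoszD -addrA.
Qed.

Lemma chebUp_cassini j :
  chebUp j.+1 ^+ 2 - 2%:P * 'X * chebUp j.+1 * chebUp j + chebUp j ^+ 2 = 1.
Proof.
elim: j => [|j IHj]; first by rewrite chebUp0 chebUp1; ring.
by rewrite -IHj chebUp_rec; ring.
Qed.

Lemma chebUp_double k : chebUp k.*2.+1 = chebUp k.+1 ^+ 2 - chebUp k ^+ 2.
Proof. by rewrite -addnn chebUpD. Qed.

Lemma chebUp_doubleS k : chebUp k.*2.+2 = chebUp k.+1 * (chebUp k.+2 - chebUp k).
Proof. by rewrite -addnn -addSn chebUpD; ring. Qed.

Lemma eq_mod_cassini k (p q : {poly R}) :
    p - q = ('X + 1) *
            (1 - (chebUp k.+1 ^+ 2 - 2%:P * 'X * chebUp k.+1 * chebUp k + chebUp k ^+ 2)) ->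
  p = q.
Proof. by rewrite chebUp_cassini subrr mulr0 => /subr0_eq. Qed.

Lemma phi_double k : phi k.*2 = (chebUp k.+1 + chebUp k) * Q k.*2.
Proof.
rewrite /phi /Q odd_double doubleK /Q_even chebU_subn2 !chebU_subn1 !chebU_Posz.
have -> : chebUp k.*2 = 2%:P * 'X * chebUp k.*2.+1 - chebUp k.*2.+2.
  by rewrite chebUp_rec; ring.
rewrite chebUp_double chebUp_doubleS chebUp_rec -mul2n.
by apply: (eq_mod_cassini k); ring.
Qed.

Lemma phi_doubleS k : phi k.*2.+1 = chebUp k.+1 * Q k.*2.+1.
Proof.
rewrite /Q oddS odd_double /= uphalf_double /phi /Q_odd chebU_addn1 chebU_subn2.
rewrite !chebU_subn1 !chebU_Posz chebUp_double chebUp_doubleS chebUp_rec -mul2n.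
by apply: (eq_mod_cassini k); ring.
Qed.

End ShiftedChebyshev.

Arguments chebUp {R} j.

Section Trigonometric.
Variable R : realType.

Lemma chebUp_cos j (t : R) : (chebUp j).[cos t] * sin t = sin (j%:R * t).
Proof.
suff /(_ j)[] : forall j, (chebUp j).[cos t] * sin t = sin (j%:R * t)
    /\ (chebUp j.+1).[cos t] * sin t = sin (j.+1%:R * t) by [].
elim=> [|{}j [IHj IHjS]].
  by rewrite chebUp0 chebUp1 horner0 hornerC !mul1r !mul0r sin0.
split=> //; rewrite chebUp_rec !hornerE mulrBl -!mulrA IHjS IHj.
have -> : j.+2%:R * t = j.+1%:R * t + t by rewrite -addn1 natrD; ring.
have -> : j%:R * t = j.+1%:R * t - t by rewrite -[j.+1]addn1 natrD; ring.
by rewrite sinB sinD; ring.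
Qed.

Lemma is_Ue_double k : is_Ue k.*2 (chebUp k.+1 + chebUp k : {poly R}).
Proof.
move=> t sin_t_neq0; rewrite /Ue_trig odd_double.
set a := k.*2.+1%:R * t / 2; set b := t / 2.
have sin_t : sin t = 2 * sin b * cos b.
  by rewrite -{1}[t](_ : b + b = t) ?sinD /b; [ring | field].
have sin_b_neq0 : sin b != 0.
  by apply: contra sin_t_neq0 => /eqP b0; rewrite sin_t b0 mulr0 mul0r.
apply: (mulIf sin_t_neq0); rewrite hornerD mulrDl !chebUp_cos.
have -> : k.+1%:R * t = a + b.
  by rewrite /a /b -mul2n -[(2 * k).+1]addn1 -[k.+1]addn1 !natrD; field.
have -> : k%:R * t = a - b.
  by rewrite /a /b -mul2n -[(2 * k).+1]addn1 !natrD; field.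
by rewrite sinB sinD sin_t; field.
Qed.

Lemma is_Ue_doubleS k : is_Ue k.*2.+1 (chebUp k.+1 : {poly R}).
Proof.
move=> t sin_t_neq0; rewrite /Ue_trig /= odd_double /=.
apply: (mulIf sin_t_neq0); rewrite chebUp_cos divfK //.
by congr sin; rewrite -mul2n -[(2 * k).+2]addn2 -[k.+1]addn1 !natrD; field.
Qed.

End Trigonometric.

Theorem theoremB4 (R : realType) (n : nat) (hn : (1 <= n)%N) :
  exists Ue : {poly R}, is_Ue n Ue /\ phi n = Ue * Q n.
Proof.
(* The identity holds for n = 0 as well. *)
rewrite -[n]odd_double_half; case: (odd n); rewrite /= ?add1n ?add0n.
- by exists (chebUp n./2.+1); split; [exact: is_Ue_doubleS | exact: phi_doubleS].
- exists (chebUp n./2.+1 + chebUp n./2).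
  by split; [exact: is_Ue_double | exact: phi_double].
Qed.
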